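(* Let $M$ be a real symmetric $n \times n$ matrix whose diagonal entries are all $0$ and whose off-diagonal entries each lie in $\{0, 1, -1\}$. Let $e$ be an eigenvalue of $M$ of multiplicity at least $m$, where $m \ge 1$. Then $e^2 \le (n-1)(n-m)/m$. *)

From mathcomp Require Import all_boot all_order all_algebra.
From mathcomp Require Import reals.
Set Implicit Arguments. Unset Strict Implicit. Unset Printing Implicit Defensive.
Import Order.TTheory GRing.Theory Num.Theory.
Local Open Scope ring_scope.

Definition signed_adj (R : pzRingType) (n : nat) (M : 'M[R]_n) : Prop :=
  (forall i, M i i = 0) /\
  (forall i j, i != j -> M i j = 0 \/ M i j = 1 \/ M i j = -1).

Definition eig_mult_ge (R : idomainType) (n : nat) (M : 'M[R]_n) (e : R) (m : nat) : Prop :=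
  (('X - e%:P) ^+ m %| char_poly M)%R.

From mathcomp Require Import all_boot all_order all_algebra.
From mathcomp Require Import reals complex ring lra.
Set Implicit Arguments. Unset Strict Implicit. Unset Printing Implicit Defensive.
Import Order.TTheory GRing.Theory Num.Theory.
Local Open Scope ring_scope.

(* The eigenvalues r_1, ..., r_n of M are real, sum to tr M = 0, and their
   squares sum to tr (M^2), the sum of the squared entries, which is at most
   n(n - 1).  If e occurs k >= m times among them, the other n - k eigenvalues
   sum to -ke, so Cauchy-Schwarz gives (ke)^2 <= (n - k)(n(n - 1) - k e^2),
   i.e. k e^2 <= (n - 1)(n - k); finally (n - k)/k decreases in k. *)

Lemma char_poly_conj (F : fieldType) n (P A : 'M[F]_n) : P \in unitmx ->
  char_poly (invmx P *m A *m P) = char_poly A.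
Proof.
move=> P_unit; rewrite /char_poly /char_poly_mx !map_mxM.
have PV_P : map_mx polyC (invmx P) *m map_mx polyC P = 1%:M.
  by rewrite -map_mxM mulVmx // map_mx1.
have -> : 'X%:M - map_mx polyC (invmx P) *m map_mx polyC A *m map_mx polyC P =
    map_mx polyC (invmx P) *m ('X%:M - map_mx polyC A) *m map_mx polyC P.
  by rewrite mulmxBr mulmxBl scalar_mxC -(mulmxA 'X%:M) PV_P mulmx1.
by rewrite !det_mulmx mulrAC -det_mulmx PV_P det1 mul1r.
Qed.

Lemma mxtrace_conj (F : fieldType) n (P A : 'M[F]_n) : P \in unitmx ->
  \tr (invmx P *m A *m P) = \tr A.
Proof. by move=> P_unit; rewrite mxtrace_mulC mulmxA mulmxV // mul1mx. Qed.

Lemma diag_conj_spectrum (F : fieldType) n (P : 'M[F]_n) (d : 'rV[F]_n) :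
  let A := invmx P *m diag_mx d *m P in P \in unitmx ->
  [/\ char_poly A = \prod_i ('X - (d 0 i)%:P), \tr A = \sum_i d 0 i
    & \tr (A *m A) = \sum_i d 0 i ^+ 2].
Proof.
move=> A P_unit.
have -> : A *m A = invmx P *m (diag_mx d *m diag_mx d) *m P.
  by rewrite /A -!mulmxA (mulmxA P) mulmxV // mul1mx.
rewrite mulmx_diag /A !mxtrace_conj // !mxtrace_diag char_poly_conj //.
split=> [|//|]; last by apply: eq_bigr => i _; rewrite mxE expr2.
rewrite char_poly_trig ?diag_mx_is_trig //.
by apply: eq_bigr => i _; rewrite mxE eqxx mulr1n.
Qed.

Section RealSymmetric.
Variable R : rcfType.
Local Notation toC := (real_complex R).

Lemma sym_char_poly_split n (M : 'M[R]_n) : M^T = M ->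
  exists r : 'I_n -> R, [/\ char_poly M = \prod_i ('X - (r i)%:P),
    \sum_i r i = \tr M & \sum_i r i ^+ 2 = \tr (M *m M)].
Proof.
(* Diagonalize M as a hermitian matrix over R[i] and pull back along the
   injective embedding R -> R[i]. *)
move=> M_sym; pose A := map_mx toC M.
have A_herm : A \is hermsymmx.
  apply: realsym_hermsym; last by apply/mxOverP => i j; rewrite mxE complex_real.
  by apply/is_hermitianmxP; rewrite expr0 scale1r map_mx_id // /A map_trmx M_sym.
have /orthomx_spectralP A_diag := hermitian_normalmx A_herm.
have /mxOverP d_real := hermitian_spectral_diag_real A_herm.
set d := spectral_diag A in A_diag d_real.
have [] := diag_conj_spectrum d (spectral_unit A).
rewrite -A_diag => cpA trA trA2.
exists (fun i => complex.Re (d 0 i)).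
have toC_Re i : toC (complex.Re (d 0 i)) = d 0 i by apply: RRe_real; apply: d_real.
have toC_tr (X : 'M[R]_n) : toC (\tr X) = \tr (map_mx toC X).
  by rewrite /mxtrace rmorph_sum; apply: eq_bigr => i _; rewrite mxE.
split.
- apply: (@map_poly_inj _ _ toC); rewrite map_char_poly -/A cpA.
  rewrite rmorph_prod; apply: eq_bigr => i _.
  by rewrite rmorphB /= map_polyX map_polyC; congr (_ - _%:P); apply/esym/toC_Re.
- apply: (@complexI R); rewrite toC_tr -/A trA rmorph_sum.
  by apply: eq_bigr => i _; apply: toC_Re.
- apply: (@complexI R); rewrite toC_tr map_mxM -/A trA2 rmorph_sum.
  by apply: eq_bigr => i _; rewrite rmorphXn; congr (_ ^+ _); apply: toC_Re.
Qed.

End RealSymmetric.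

Lemma dvdp_prod_XsubC_card (F : fieldType) (I : finType) (d : I -> F) c m :
  ('X - c%:P) ^+ m %| \prod_i ('X - (d i)%:P) -> (m <= #|[set i | d i == c]|)%N.
Proof.
have prod_neq0 : \prod_i ('X - (d i)%:P) != 0 by apply/monic_neq0/monic_prod_XsubC.
rewrite -mup_geq // (bigID (fun i => d i == c)) /= mupMl; last first.
  rewrite /root horner_prod; apply/prodf_neq0 => i di.
  by rewrite hornerXsubC subr_eq0 eq_sym.
have -> : \prod_(i | d i == c) ('X - (d i)%:P) = ('X - c%:P) ^+ #|[set i | d i == c]|.
  rewrite (eq_bigr (fun=> 'X - c%:P)) => [|i /eqP -> //].
  by rewrite prodr_const; congr (_ ^+ _); apply: eq_card => i; rewrite inE.
by rewrite mup_XsubCX eqxx.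
Qed.

Lemma signed_adj_tr_sqr_le (R : numDomainType) n (M : 'M[R]_n) :
  M^T = M -> signed_adj M -> \tr (M *m M) <= n%:R * (n%:R - 1).
Proof.
move=> M_sym [M_diag M_off].
have diag_sqr_le i : (M *m M) i i <= n%:R - 1.
  rewrite mxE (bigD1 i) //= M_diag mul0r add0r.
  have -> : n%:R - 1 = \sum_(j < n | j != i) 1 :> R.
    have n_gt0 : (0 < n)%N by apply: leq_ltn_trans (ltn_ord i).
    by rewrite sumr_const cardC1 card_ord -[n in LHS](prednK n_gt0) -natr1 addrK.
  apply: ler_sum => j j_neq_i; rewrite -[in M j i]M_sym mxE -expr2.
  case: (M_off i j (contra_neq esym j_neq_i)) => [->|[->|->]];
    by rewrite ?sqrrN ?expr0n ?expr1n.
rewrite /mxtrace -[n in n%:R * _]card_ord mulr_natl -sumr_const.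
exact: ler_sum.
Qed.

Lemma sqr_sum_le_card_sum_sqr (R : realFieldType) (I : finType) (A : {set I})
    (x : I -> R) :
  (\sum_(i in A) x i) ^+ 2 <= #|A|%:R * \sum_(i in A) x i ^+ 2.
Proof.
set s := \sum_(i in A) x i; set q := \sum_(i in A) x i ^+ 2; set k : R := #|A|%:R.
have [A0 | A_neq0] := eqVneq A set0.
  by rewrite /s /k A0 big_set0 cards0 expr0n mul0r.
have k_gt0 : 0 < k by rewrite ltr0n card_gt0.
have var_ge0 : 0 <= \sum_(i in A) (k * x i - s) ^+ 2.
  by apply: sumr_ge0 => i _; apply: sqr_ge0.
have var_eq : \sum_(i in A) (k * x i - s) ^+ 2 = k * (k * q - s ^+ 2).
  rewrite (eq_bigr (fun i => k ^+ 2 * x i ^+ 2 - 2 * k * s * x i + s ^+ 2));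
    last by move=> i _; ring.
  rewrite big_split sumrB /= -!mulr_sumr sumr_const -/q -/s mulr_natr -/k; ring.
by rewrite var_eq pmulr_rge0 // subr_ge0 in var_ge0.
Qed.

Lemma zero_sum_level_set_bound (R : realFieldType) (I : finType) (r : I -> R) e :
  \sum_i r i = 0 ->
  #|I|%:R * (#|[set i | r i == e]|%:R * e ^+ 2) <=
    (#|I|%:R - #|[set i | r i == e]|%:R) * \sum_i r i ^+ 2.
Proof.
set A := [set i | r i == e]; set k : R := #|A|%:R.
have sum_split (F : I -> R) : \sum_i F i = \sum_(i in A) F i + \sum_(i in ~: A) F i.
  by rewrite (bigID (mem A)) /=; congr (_ + _); apply: eq_bigl => i; rewrite ?inE.
have sum_const_A (F : R -> R) : \sum_(i in A) F (r i) = k * F e.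
  rewrite (eq_bigr (fun=> F e)) ?sumr_const ?mulr_natl // => i.
  by rewrite inE => /eqP ->.
have card_compl : #|~: A|%:R = #|I|%:R - k :> R.
  by rewrite -(cardsC A) natrD -/k addrAC subrr add0r.
rewrite (sum_split r) (sum_split (fun i => r i ^+ 2)).
rewrite (sum_const_A id) (sum_const_A (fun x => x ^+ 2)) /=.
set s := \sum_(i in ~: A) r i; set q := \sum_(i in ~: A) r i ^+ 2 => sum0.
have := @sqr_sum_le_card_sum_sqr _ _ (~: A) r; rewrite -/s -/q card_compl.
have -> : s = - (k * e) by apply/eqP; rewrite -addr_eq0 addrC sum0.
move=> cs; rewrite mulrDr; set N : R := #|I|%:R.
have -> : N * (k * e ^+ 2) = (N - k) * (k * e ^+ 2) + (- (k * e)) ^+ 2 by ring.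
by rewrite lerD2l.
Qed.

Lemma level_bound_arith (R : realFieldType) (n m k : nat) (x : R) :
  (1 <= m <= k)%N -> (k <= n)%N ->
  n%:R * (k%:R * x) <= (n%:R - k%:R) * (n%:R * (n%:R - 1)) ->
  x <= n.-1%:R * (n%:R - m%:R) / m%:R.
Proof.
move=> /andP[m_ge1 m_le_k] k_le_n bound.
have n_gt0 : (0 < n)%N by apply: leq_trans k_le_n; apply: leq_trans m_le_k.
rewrite -subn1 natrB // ler_pdivlMr ?ltr0n //.
move: bound; set N : R := n%:R; set K : R := k%:R; set M : R := m%:R => bound.
have M_le_K : M <= K by rewrite ler_nat.
have M_ge1 : 1 <= M by rewrite ler1n.
have K_le_N : K <= N by rewrite ler_nat.
have Kx_le : K * x <= (N - K) * (N - 1).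
  rewrite -(@ler_pM2l _ N) ?ltr0n //.
  by have -> : N * ((N - K) * (N - 1)) = (N - K) * (N * (N - 1)) by ring.
have cross : M * (N - K) <= K * (N - M) by nra.
have : K * (x * M) <= K * ((N - 1) * (N - M)) by nra.
by rewrite ler_pM2l //; lra.
Qed.

Theorem lemma2p3 (R : realType) (n m : nat) (M : 'M[R]_n) (e : R) :
  M^T = M -> signed_adj M -> (1 <= m)%N -> eig_mult_ge M e m ->
  e ^+ 2 <= (n.-1)%:R * (n%:R - m%:R) / m%:R.
Proof.
move=> M_sym M_adj m_ge1 e_mult.
have [r [char_M tr_M tr_M2]] := sym_char_poly_split M_sym.
set k := #|[set i | r i == e]|.
have m_le_k : (m <= k)%N by apply: dvdp_prod_XsubC_card; rewrite -char_M.
have k_le_n : (k <= n)%N by rewrite -[n]card_ord max_card.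
have sum_r0 : \sum_i r i = 0 by rewrite tr_M /mxtrace big1 // => i _; case: M_adj.
apply: (@level_bound_arith _ n m k); rewrite ?m_ge1 //.
have := @zero_sum_level_set_bound _ _ r e sum_r0.
rewrite card_ord tr_M2 -/k => /le_trans; apply.
by rewrite ler_wpM2l ?subr_ge0 ?ler_nat ?signed_adj_tr_sqr_le.
Qed.
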